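(* Let $l,r$ be positive integers. For every $n\ge r$, the sequence $k\mapsto\mathcal{A}_r^{(l)}(n,k)$ is log-concave (and hence unimodal).
   Context: A subexceedant function on $[n]$ is a map $f:[n]\to[n]$ with $1\le f(i)\le i$ for all $i$. Its block leader set is $\mathrm{bl}(f)=\{i\in[n]: f(i)\notin f(\{1,\dots,i-1\})\}$. For positive integers $l,r$, $\mathcal{A}_r^{(l)}(n,k)$ is the number of $l$-tuples $(f_1,\dots,f_l)$ of subexceedant functions on $[n]$ such that $\{1,\dots,r\}\subseteq\mathrm{bl}(f_1)$, $|\mathrm{bl}(f_1)|=k+1$, and $\mathrm{bl}(f_1)=\cdots=\mathrm{bl}(f_l)$. A sequence $(a_k)$ is log-concave if $a_k^2\ge a_{k-1}a_{k+1}$ for all $k$. *)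

From mathcomp Require Import all_boot.
Set Implicit Arguments. Unset Strict Implicit. Unset Printing Implicit Defensive.

(* Convention: [n] = {1,...,n} is represented by 'I_n = {0,...,n-1},
   the element i+1 of [n] corresponding to i : 'I_n.  Then the condition
   1 <= f(i) <= i becomes f i <= i (0-indexed). *)

Definition subexceedant (n : nat) (f : {ffun 'I_n -> 'I_n}) : bool :=
  [forall i, (f i <= i)%N].

Definition bl (n : nat) (f : {ffun 'I_n -> 'I_n}) : {set 'I_n} :=
  [set i : 'I_n | f i \notin (f @: [set j : 'I_n | (j < i)%N])].

(* The tuple is indexed by 'I_l, with f_1 at
   index 0 (only used when l > 0). *)
Definition A (l r n k : nat) : nat :=
  #|[set t : {ffun 'I_l -> {ffun 'I_n -> 'I_n}} |
      [forall j, subexceedant (t j)] &&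
      [exists j0 : 'I_l,
         [&& (val j0 == 0%N),
             [forall i : 'I_n, (i < r)%N ==> (i \in bl (t j0))],
             #|bl (t j0)| == k.+1 &
             [forall j, bl (t j) == bl (t j0)]]]]|.

Definition log_concave (a : nat -> nat) : Prop :=
  forall k, (a k * a k.+2 <= a k.+1 ^ 2)%N.

Definition unimodal (a : nat -> nat) : Prop :=
  exists m, (forall k, (k < m)%N -> (a k <= a k.+1)%N) /\
            (forall k, (m <= k)%N -> (a k.+1 <= a k)%N).

From mathcomp Require Import all_boot zify.

Set Implicit Arguments.
Unset Strict Implicit.
Unset Printing Implicit Defensive.

(* Extending a subexceedant function f on [n] by a value f(n+1) in [n+1] makes n+1 a
   block leader exactly when the value is new; f takes exactly |bl f| values, so there
   are n+1-|bl f| new ones.  For tuples with a common block leader set this gives, with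
   a(n,k) the number of tuples having k block leaders,
     a(n+1,k) = [r <= n] k^l a(n,k) + (n+2-k)^l a(n,k-1),
   the first term being absent for n < r because n+1 must then be a leader.  Along this
   recurrence one propagates by induction the stronger inequality
     (k+1)^l (n-k)^l a(n,k) a(n,k+2) <= k^l (n-k-1)^l a(n,k+1)^2,
   which gives log-concavity; as the support of k |-> a(n,k) is the interval [r,n],
   log-concavity in turn gives unimodality. *)

Lemma in_bl n (f : {ffun 'I_n -> 'I_n}) i :
  (i \in bl f) = [forall j : 'I_n, (j < i) ==> (f j != f i)].
Proof.
rewrite inE; apply/negP/forallP => [H j|H /imsetP[j]].
  apply/implyP => lt_ji; apply/negP => /eqP e; apply: H.
  by apply/imsetP; exists j; rewrite ?inE.
by rewrite inE => lt_ji e; have := H j; rewrite lt_ji e eqxx.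
Qed.

Section Extension.

Variable n : nat.
Implicit Types (f g : {ffun 'I_n -> 'I_n}) (v w : 'I_n.+1).

Definition widen1 (j : 'I_n) : 'I_n.+1 := widen_ord (leqnSn n) j.

Definition extend f v : {ffun 'I_n.+1 -> 'I_n.+1} :=
  [ffun i => if insub (val i) is Some j then widen1 (f j) else v].

Definition restrict (f : {ffun 'I_n.+1 -> 'I_n.+1}) : {ffun 'I_n -> 'I_n} :=
  [ffun j => odflt j (insub (val (f (widen1 j))))].

Definition img1 f : {set 'I_n.+1} := [set widen1 (f j) | j : 'I_n].

Lemma widen1_inj : injective widen1.
Proof. by move=> i j /(congr1 val) /= /val_inj. Qed.

Lemma ord_maxVwiden1 (i : 'I_n.+1) : i = ord_max \/ exists j, i = widen1 j.
Proof.
case: (ltnP i n) => [lt_in|le_ni]; [right; exists (Ordinal lt_in)|left].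
  exact: val_inj.
by apply: val_inj; apply/eqP; rewrite eqn_leq le_ni -ltnS ltn_ord.
Qed.

Lemma extend_widen1 f v j : extend f v (widen1 j) = widen1 (f j).
Proof. by rewrite ffunE /= valK. Qed.

Lemma extend_max f v : extend f v ord_max = v.
Proof. by rewrite ffunE /= insubF //= ltnn. Qed.

Lemma extend_inj f g v w : extend f v = extend g w -> f = g /\ v = w.
Proof.
move=> e; split; last by rewrite -(extend_max f v) -(extend_max g w) e.
apply/ffunP => j; apply: widen1_inj.
by rewrite -(extend_widen1 f v) -(extend_widen1 g w) e.
Qed.

Lemma subexceedant_extend f v : subexceedant (extend f v) = subexceedant f.
Proof.
apply/forallP/forallP => H j; first by have := H (widen1 j); rewrite extend_widen1.
have [->|[j' ->]] := ord_maxVwiden1 j; first by rewrite extend_max /= -ltnS.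
by rewrite extend_widen1; exact: H.
Qed.

Lemma restrictK (f : {ffun 'I_n.+1 -> 'I_n.+1}) :
  subexceedant f -> extend (restrict f) (f ord_max) = f.
Proof.
move=> /forallP sub_f; apply/ffunP => i.
have [->|[j ->]] := ord_maxVwiden1 i; first by rewrite extend_max.
rewrite extend_widen1 ffunE.
have lt_fj : val (f (widen1 j)) < n.
  by have := sub_f (widen1 j); have := ltn_ord j; rewrite /widen1 /=; lia.
case: insubP => [u _ fj|]; last by rewrite lt_fj.
by apply: val_inj; rewrite /= fj.
Qed.

Lemma bl_extend_widen1 f v j : (widen1 j \in bl (extend f v)) = (j \in bl f).
Proof.
rewrite !in_bl; apply/forallP/forallP => H j'.
  by have := H (widen1 j'); rewrite !extend_widen1 (inj_eq widen1_inj).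
apply/implyP => lt_j'j; have [e|[j'' e]] := ord_maxVwiden1 j'.
  by move: lt_j'j; rewrite e /=; have := ltn_ord j; lia.
by move: lt_j'j (H j''); rewrite e !extend_widen1 (inj_eq widen1_inj) => /= ->.
Qed.

Lemma bl_extend_max f v : (ord_max \in bl (extend f v)) = (v \notin img1 f).
Proof.
rewrite in_bl extend_max; apply/forallP/negP => [H /imsetP[j _ vE]|H j].
  by have := H (widen1 j); rewrite extend_widen1 /= ltn_ord -vE eqxx.
apply/implyP => lt_jn; have [e|[j' ->]] := ord_maxVwiden1 j.
  by move: lt_jn; rewrite e ltnn.
by rewrite extend_widen1; apply/eqP => vE; apply: H; apply/imsetP; exists j'.
Qed.

Lemma card_bl_extend f v : #|bl (extend f v)| = #|bl f| + (v \notin img1 f).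
Proof.
rewrite -!sum1_card big_mkcond [in RHS]big_mkcond /= big_ord_recr /= -bl_extend_max.
by congr (_ + _); apply: eq_bigr => i _; rewrite -[widen_ord _ i]/(widen1 i) bl_extend_widen1.
Qed.

Lemma prefix_bl_extend f v r :
  [forall i : 'I_n.+1, (i < r) ==> (i \in bl (extend f v))] =
  [forall i : 'I_n, (i < r) ==> (i \in bl f)] && ((n < r) ==> (v \notin img1 f)).
Proof.
apply/forallP/andP => [H|[/forallP H1 /implyP H2] i].
  split; first by apply/forallP => i; have := H (widen1 i); rewrite bl_extend_widen1.
  by apply/implyP => lt_nr; have := H ord_max; rewrite bl_extend_max /= lt_nr.
have [->|[j ->]] := ord_maxVwiden1 i; first by rewrite bl_extend_max; exact/implyP.
by rewrite bl_extend_widen1; exact: H1.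
Qed.

Lemma eq_bl_extend f g v w :
  (bl (extend f v) == bl (extend g w)) = (bl f == bl g) && ((v \notin img1 f) == (w \notin img1 g)).
Proof.
apply/eqP/andP => [E|[/eqP E1 /eqP E2]].
  split; last by rewrite -!bl_extend_max E.
  by apply/eqP/setP => j; rewrite -(bl_extend_widen1 f v) -(bl_extend_widen1 g w) E.
apply/setP => i; have [->|[j ->]] := ord_maxVwiden1 i; first by rewrite !bl_extend_max.
by rewrite !bl_extend_widen1 E1.
Qed.

(* Every value of [f] is first taken at a block leader, and [f] is injective on [bl f]. *)
Lemma card_img1 f : #|img1 f| = #|bl f|.
Proof.
have first_leader i : f i \in f @: bl f.
  elim: {i}(val i) {-2}i (leqnn i) => [|m IH] i le_im.
    apply: imset_f; rewrite in_bl; apply/forallP => j; apply/implyP; lia.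
  case bl_i: (i \in bl f); first exact: imset_f.
  move: bl_i; rewrite inE => /negbFE /imsetP [j]; rewrite inE => lt_ji ->.
  by apply: IH; lia.
have inj_bl : {in bl f &, injective f}.
  suff lt_neq i i' : i \in bl f -> i' \in bl f -> f i = f i' -> i < i' -> False.
    move=> i i' bl_i bl_i' e; case: (ltngtP i i') => c; last exact: val_inj.
      by case: (lt_neq _ _ bl_i bl_i' e c).
    by case: (lt_neq _ _ bl_i' bl_i (esym e) c).
  move=> _ bl_i' e lt_ii'; move: bl_i'; rewrite inE => /negP; apply.
  by apply/imsetP; exists i; rewrite ?inE.
have -> : img1 f = widen1 @: (f @: bl f).
  apply/setP => x; apply/imsetP/imsetP => [[j _ ->]|[y /imsetP[j _ ->] ->]].
    by exists (f j); rewrite ?first_leader.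
  by exists j.
by rewrite card_imset ?card_in_imset //; exact: widen1_inj.
Qed.

Lemma card_fresh f : #|[set v | v \notin img1 f]| = n.+1 - #|bl f|.
Proof.
have -> : [set v | v \notin img1 f] = ~: img1 f by apply/setP => v; rewrite !inE.
by rewrite cardsCs setCK card_ord card_img1.
Qed.

End Extension.

Lemma card_ffun_forall (I J : finType) (P : I -> pred J) :
  #|[set v : {ffun I -> J} | [forall i, P i (v i)]]| = \prod_i #|[set x | P i x]|.
Proof.
rewrite (eq_card (B := family (fun i => [set x | P i x]))); last first.
  by move=> v; rewrite inE; apply/forallP/familyP => H i; have := H i; rewrite ?inE.
by rewrite card_family foldrE big_map big_enum.
Qed.

Lemma sum_nat_of_bool (T : finType) (P : pred T) : \sum_x (P x : nat) = #|[set x | P x]|.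
Proof. by rewrite -sum1_card [RHS]big_mkcond; apply: eq_bigr => x _; rewrite inE; case: (P x). Qed.

Lemma forall_andb (T : finType) (a b : pred T) :
  [forall x, a x && b x] = [forall x, a x] && [forall x, b x].
Proof.
apply/forallP/andP => [H|[/forallP Ha /forallP Hb] x]; last by rewrite Ha Hb.
by split; apply/forallP => x; case/andP: (H x).
Qed.

Lemma sum_forall_andb (I J : finType) (P : I -> pred J) (c : bool) :
  \sum_(v : {ffun I -> J}) ([forall i, P i (v i)] && c : nat) = c * \prod_i #|[set x | P i x]|.
Proof.
rewrite -card_ffun_forall -sum_nat_of_bool; case: c; last by rewrite big1 // => v _; rewrite andbF.
by rewrite mul1n; apply: eq_bigr => v _; rewrite andbT.
Qed.

Fixpoint arec (l r n k : nat) : nat :=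
  if n is m.+1 then
    (r <= m) * k ^ l * arec l r m k + (0 < k) * (m.+2 - k) ^ l * arec l r m k.-1
  else (k == 0).

Section Counting.

Variables (l r : nat).
Local Notation fns n := {ffun 'I_l.+1 -> {ffun 'I_n -> 'I_n}}.

Definition admissible n (t : fns n) : bool :=
  [&& [forall j, subexceedant (t j)],
      [forall i : 'I_n, (i < r) ==> (i \in bl (t ord0))]
    & [forall j, bl (t j) == bl (t ord0)]].

Definition counted n k (t : fns n) : bool := admissible t && (#|bl (t ord0)| == k).

Definition count n k : nat := #|[set t : fns n | counted k t]|.

Lemma A_count n k : A l.+1 r n k = count n k.+1.
Proof.
apply: eq_card => t; rewrite !inE /counted /admissible.
apply/idP/idP.
  case/andP=> sub_t /existsP[j0 /and4P[/eqP j0E]].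
  have -> : j0 = ord0 by apply: val_inj.
  by move=> pre card bl_eq; rewrite sub_t pre card bl_eq.
case/andP=> /and3P[sub_t pre bl_eq] card.
by rewrite sub_t; apply/existsP; exists ord0; rewrite /= pre card bl_eq.
Qed.

Definition extendt n (p : fns n * {ffun 'I_l.+1 -> 'I_n.+1}) : fns n.+1 :=
  [ffun j => extend (p.1 j) (p.2 j)].

Lemma extendt_inj n : injective (@extendt n).
Proof.
move=> [t v] [t' v'] /ffunP E.
have E' j : t j = t' j /\ v j = v' j by apply: extend_inj; have := E j; rewrite !ffunE.
by congr pair; apply/ffunP => j; case: (E' j).
Qed.

Lemma count_extendt n k : count n.+1 k = #|[set p | counted k (@extendt n p)]|.
Proof.
rewrite /count -(card_imset _ (@extendt_inj n)); apply: eq_card => t.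
rewrite inE; apply/idP/imsetP => [cnt_t|[p]]; last by rewrite inE => cnt_p ->.
have /andP[/and3P[/forallP sub_t _ _] _] := cnt_t.
exists ([ffun j => restrict (t j)], [ffun j => t j ord_max]); last first.
  by apply/ffunP => j; rewrite !ffunE /= restrictK.
by rewrite inE; congr (counted k _): cnt_t; apply/ffunP => j; rewrite !ffunE /= restrictK.
Qed.

Lemma admissible_extendt n (t : fns n) v :
  admissible (extendt (t, v)) =
  [&& admissible t,
      [forall j, (v j \notin img1 (t j)) == (v ord0 \notin img1 (t ord0))]
    & (n < r) ==> (v ord0 \notin img1 (t ord0))].
Proof.
have E j : extendt (t, v) j = extend (t j) (v j) by rewrite ffunE.
rewrite /admissible.
have -> : [forall j, subexceedant (extendt (t, v) j)] = [forall j, subexceedant (t j)].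
  by apply: eq_forallb => j; rewrite E subexceedant_extend.
have -> : [forall j, bl (extendt (t, v) j) == bl (extendt (t, v) ord0)] =
          [forall j, bl (t j) == bl (t ord0)] &&
          [forall j, (v j \notin img1 (t j)) == (v ord0 \notin img1 (t ord0))].
  by rewrite -forall_andb; apply: eq_forallb => j; rewrite !E eq_bl_extend.
rewrite E prefix_bl_extend.
by apply/and4P/and3P => [[-> /andP[-> ->] -> ->]|[/and3P[-> -> ->] -> ->]].
Qed.

Lemma sum_counted_extendt n k (t : fns n) (s := #|bl (t ord0)|) :
  \sum_v (counted k (extendt (t, v)) : nat) =
  admissible t * ((r <= n) * (s == k) * s ^ l.+1 + (s.+1 == k) * (n.+1 - s) ^ l.+1).
Proof.
case adm_t: (admissible t); last first.
  by rewrite big1 // => v _; rewrite /counted admissible_extendt adm_t.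
have bl_t j : bl (t j) = bl (t ord0) by apply/eqP; case/and3P: adm_t => _ _ /forallP.
have split_v v : (counted k (extendt (t, v)) : nat) =
    ([forall j, v j \notin img1 (t j)] && (s.+1 == k)) +
    ([forall j, v j \in img1 (t j)] && ((r <= n) && (s == k))).
  rewrite /counted admissible_extendt adm_t ffunE card_bl_extend -/s /=.
  case fresh0: (v ord0 \notin img1 (t ord0)).
    under eq_forallb => j do rewrite eqb_id.
    have -> : [forall j, v j \in img1 (t j)] = false.
      by apply/negbTE/forallP => /(_ ord0); apply/negP; rewrite fresh0.
    by rewrite implybT andbT addn1 addn0.
  under eq_forallb => j do rewrite eqbF_neg negbK.
  have -> : [forall j, v j \notin img1 (t j)] = false.
    by apply/negbTE/forallP => /(_ ord0); rewrite fresh0.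
  by rewrite implybF addn0 -leqNgt add0n andbA.
under eq_bigr => v _ do rewrite split_v.
rewrite big_split /= (sum_forall_andb (fun j x => x \notin img1 (t j)))
  (sum_forall_andb (fun j x => x \in img1 (t j))) mul1n.
under eq_bigr => j _ do rewrite card_fresh bl_t.
under [X in _ + _ * X]eq_bigr => j _ do rewrite cardsE card_img1 bl_t.
by rewrite !prod_nat_const !card_ord addnC -mulnb.
Qed.

Lemma count_rec n k :
  count n.+1 k = (r <= n) * k ^ l.+1 * count n k + (0 < k) * (n.+2 - k) ^ l.+1 * count n k.-1.
Proof.
rewrite count_extendt -sum_nat_of_bool.
rewrite (eq_bigr (fun p => counted k (extendt (p.1, p.2)) : nat)); last by case.
rewrite -(pair_bigA _ (fun t v => counted k (extendt (t, v)) : nat)) /=.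
under eq_bigr => t _ do rewrite sum_counted_extendt.
have regroup (t : fns n) (s := #|bl (t ord0)|) :
    admissible t * ((r <= n) * (s == k) * s ^ l.+1 + (s.+1 == k) * (n.+1 - s) ^ l.+1) =
    (r <= n) * k ^ l.+1 * counted k t + (0 < k) * (n.+2 - k) ^ l.+1 * counted k.-1 t.
  rewrite /counted -/s; case: (admissible t); last by rewrite !muln0.
  rewrite !mul1n /=; case: k => [|k] /=.
    by case: eqP => [->|_]; rewrite ?muln0 ?muln1 ?addn0.
  rewrite eqSS subSS; case: eqP => [->|_]; first by rewrite gtn_eqF ?muln1 ?muln0 // mulnC.
  by case: eqP => [->|_]; rewrite ?muln0 ?muln1 ?add0n // mulnC.
under eq_bigr => t _ do rewrite regroup.
by rewrite big_split -!big_distrr /= !sum_nat_of_bool.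
Qed.

Lemma count0 k : count 0 k = (k == 0).
Proof.
have counted0 (t : fns 0) : counted k t = (k == 0).
  have bl0 (f : {ffun 'I_0 -> 'I_0}) : bl f = set0 by apply/setP => -[].
  rewrite /counted /admissible bl0 cards0 eq_sym.
  have -> : [forall j, subexceedant (t j)] by apply/forallP => j; apply/forallP => -[].
  have -> : [forall i : 'I_0, (i < r) ==> (i \in set0)] by apply/forallP => -[].
  by have -> : [forall j, bl (t j) == set0] by apply/forallP => j; rewrite bl0.
rewrite /count -sum_nat_of_bool; under eq_bigr => t _ do rewrite counted0.
by rewrite sum_nat_const card_ffun card_ffun !card_ord exp1n mul1n.
Qed.

Lemma count_arec n k : count n k = arec l.+1 r n k.
Proof. by elim: n k => [|n IHn] k; rewrite ?count0 // count_rec !IHn. Qed.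

End Counting.

Lemma leq_ratio_trans c d e f P Q : 0 < c -> c * P <= d * Q -> e * d <= f * c -> e * P <= f * Q.
Proof.
move=> c_gt0 PQ de; rewrite -(leq_pmul2l c_gt0).
have := leq_mul (leqnn e) PQ; have := leq_mul de (leqnn Q); nia.
Qed.

(* With a'_j = j^l a_j + (m+2-j)^l a_(j-1) and y = m-K-2: of the four products in
   a'_(K+1) a'_(K+3), those in a1 a3 and a0 a2 are bounded by the two hypotheses, the one
   in a0 a3 by their product, and the one in a1 a2 equals a cross term of a'_(K+2)^2. *)
Lemma ulc_step l K y a0 a1 a2 a3 : 0 < l ->
  (K.+2 * y.+1) ^ l * (a1 * a3) <= (K.+1 * y) ^ l * a2 ^ 2 ->
  (K.+1 * y.+2) ^ l * (a0 * a2) <= (K * y.+1) ^ l * a1 ^ 2 ->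
  (a1 = 0 \/ a2 = 0 -> a0 * a3 = 0) ->
  (K.+2 * y.+2) ^ l * ((K.+1 ^ l * a1 + y.+3 ^ l * a0) * (K.+3 ^ l * a3 + y.+1 ^ l * a2))
  <= (K.+1 * y.+1) ^ l * (K.+2 ^ l * a2 + y.+2 ^ l * a1) ^ 2.
Proof.
move=> l_gt0 H13 H02 zeros.
have T13 : (K.+2 * y.+2) ^ l * K.+1 ^ l * K.+3 ^ l * (a1 * a3)
           <= (K.+1 * y.+1) ^ l * K.+2 ^ l * K.+2 ^ l * a2 ^ 2.
  apply: leq_ratio_trans H13 _; first by rewrite expn_gt0 muln_gt0.
  by rewrite -!expnMn leq_exp2r //; nia.
have T02 : (K.+2 * y.+2) ^ l * y.+3 ^ l * y.+1 ^ l * (a0 * a2)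
           <= (K.+1 * y.+1) ^ l * y.+2 ^ l * y.+2 ^ l * a1 ^ 2.
  apply: leq_ratio_trans H02 _; first by rewrite expn_gt0 muln_gt0.
  by rewrite -!expnMn leq_exp2r //; nia.
have T03 : (K.+2 * y.+2) ^ l * y.+3 ^ l * K.+3 ^ l * (a0 * a3)
           <= (K.+1 * y.+1) ^ l * K.+2 ^ l * y.+2 ^ l * (a1 * a2).
  have [a1_0|a1_gt0] := posnP a1; first by rewrite zeros ?muln0; [|left].
  have [a2_0|a2_gt0] := posnP a2; first by rewrite zeros ?muln0; [|right].
  have H03 : ((K.+2 * y.+1) * (K.+1 * y.+2)) ^ l * (a0 * a3)
             <= ((K.+1 * y) * (K * y.+1)) ^ l * (a1 * a2).
    rewrite -(leq_pmul2r (_ : 0 < a1 * a2)) ?muln_gt0 ?a1_gt0 //.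
    rewrite (expnMn (K.+2 * y.+1)) (expnMn (K.+1 * y)).
    move: (leq_mul H13 H02).
    move: ((K.+2 * y.+1) ^ l) ((K.+1 * y.+2) ^ l) ((K.+1 * y) ^ l) ((K * y.+1) ^ l) => c c' d d' H.
    have -> : c * c' * (a0 * a3) * (a1 * a2) = c * (a1 * a3) * (c' * (a0 * a2)) by nia.
    by have -> : d * d' * (a1 * a2) * (a1 * a2) = d * a2 ^ 2 * (d' * a1 ^ 2) by nia.
  apply: leq_ratio_trans H03 _; first by rewrite expn_gt0 !muln_gt0.
  rewrite -!expnMn leq_exp2r //.
  have KK : K * K.+3 <= K.+1 * K.+2 by nia.
  have yy : y * y.+3 <= y.+1 * y.+2 by nia.
  have := leq_mul (leqnn (K.+2 * y.+2 * K.+1 * y.+1)) (leq_mul KK yy); nia.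
have T12 : (K.+2 * y.+2) ^ l * K.+1 ^ l * y.+1 ^ l * (a1 * a2)
           = (K.+1 * y.+1) ^ l * K.+2 ^ l * y.+2 ^ l * (a1 * a2).
  by rewrite -!expnMn; congr (_ ^ _ * _); nia.
move: T13 T02 T03 T12; clear.
move: ((K.+2 * y.+2) ^ l) ((K.+1 * y.+1) ^ l) (K.+1 ^ l) (K.+2 ^ l) (K.+3 ^ l).
move: (y.+1 ^ l) (y.+2 ^ l) (y.+3 ^ l) => Y1 Y2 Y3 C D X1 X2 X3 T13 T02 T03 T12; nia.
Qed.

Section Recurrence.

Variables (l r : nat).
Hypotheses (l_gt0 : 0 < l) (r_gt0 : 0 < r).
Local Notation a := (arec l r).

Lemma arec_small n k : n <= r -> a n k = (k == n).
Proof.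
elim: n k => [|n IHn] k le_nr //=.
rewrite !IHn ?(ltnW le_nr) // leqNgt le_nr mul0n add0n.
case: k => [|k] //=; rewrite !mul1n eqSS.
by case: eqP => [->|_]; rewrite ?subSnn ?exp1n ?muln0.
Qed.

Lemma arec_succ m k : r <= m -> a m.+1 k = k ^ l * a m k + (0 < k) * (m.+2 - k) ^ l * a m k.-1.
Proof. by move=> le_rm /=; rewrite le_rm mul1n. Qed.

Lemma arec_gt0 m k : r <= m -> (0 < a m k) = (r <= k <= m).
Proof.
elim: m k => [|m IHm] k le_rm; first by move: le_rm; rewrite leqn0 => /eqP; lia.
have [le_rm'|lt_mr] := leqP r m; last first.
  by rewrite arec_small //; case: eqP => [->|]; lia.
rewrite arec_succ // addn_gt0 !muln_gt0 !expn_gt0 !IHm //.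
case: k => [|k] /=; first by lia.
rewrite subSS; lia.
Qed.

Lemma arec_eq0 m k : r <= m -> (a m k == 0) = (k < r) || (m < k).
Proof. by move=> le_rm; rewrite eqn0Ngt arec_gt0 // negb_and -!ltnNge. Qed.

(* Equivalently, [k |-> a m k / 'C(m.-1, k.-1) ^ l] is log-concave on the support of [a m]. *)
Lemma arec_ulc m K : r <= m ->
  (K.+1 * (m - K)) ^ l * a m K * a m K.+2 <= (K * (m - K.+1)) ^ l * a m K.+1 ^ 2.
Proof.
elim: m K => [|m IHm] K le_rm; first by move: le_rm; rewrite leqn0 => /eqP; lia.
have [le_rm'|lt_mr] := leqP r m; last first.
  rewrite !arec_small //; case: eqP => [->|_]; last by rewrite muln0 mul0n.
  by rewrite subnn muln0 exp0n.
case: K => [|K].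
  have -> : a m.+1 0 = 0 by apply/eqP; rewrite arec_eq0 // r_gt0.
  by rewrite muln0 mul0n.
have [lt_mK2|le_K2m] := ltnP m K.+2.
  have -> : a m.+1 K.+3 = 0 by apply/eqP; rewrite arec_eq0 //; lia.
  by rewrite muln0.
have [y def_m] : exists y, m = K + y.+2 by exists (m - K.+2); lia.
have IH1 := IHm K.+1 le_rm'; have IH0 := IHm K le_rm'.
have e0 : m - K = y.+2 by lia.
have e1 : m - K.+1 = y.+1 by lia.
have e2 : m - K.+2 = y by lia.
rewrite e1 e2 in IH1; rewrite e0 e1 in IH0.
rewrite !arec_succ // !subSS /= !mul1n -mulnA e0 e1.
have -> : m.+1 - K = y.+3 by lia.
apply: ulc_step => //; [by rewrite mulnA | by rewrite mulnA | ].
by case=> /eqP; rewrite arec_eq0 // => out; apply/eqP; rewrite muln_eq0 !arec_eq0 //; lia.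
Qed.

Lemma arec_log_concave m : r <= m -> log_concave (a m).
Proof.
move=> le_rm [|k].
  have -> : a m 0 = 0 by apply/eqP; rewrite arec_eq0 // r_gt0.
  by rewrite mul0n.
have [le_mk2|lt_k2m] := leqP m k.+2.
  have -> : a m k.+3 = 0 by apply/eqP; rewrite arec_eq0 //; lia.
  by rewrite muln0.
have c_gt0 : 0 < (k.+1 * (m - k.+2)) ^ l by rewrite expn_gt0 muln_gt0 subn_gt0 lt_k2m.
rewrite -(leq_pmul2l c_gt0); apply: leq_trans (arec_ulc k.+1 le_rm).
by rewrite mulnA; do 2!apply: leq_mul => //; rewrite leq_exp2r //; nia.
Qed.

End Recurrence.

Definition no_internal_zeros (a : nat -> nat) : Prop :=
  forall i j k, 0 < a i -> 0 < a j -> i <= k <= j -> 0 < a k.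

Section LogConcaveUnimodal.

Variable a : nat -> nat.
Hypotheses (lc_a : log_concave a) (nz_a : no_internal_zeros a).

Lemma log_concave_desc k0 k : a k0.+1 < a k0 -> k0 <= k -> a k.+1 < a k \/ a k.+1 = 0.
Proof.
move=> desc0; elim: k => [|k IHk]; first by rewrite leqn0 => /eqP <-; left.
rewrite leq_eqVlt => /predU1P[<-|lt_k0k]; first by left.
have desc_k := IHk lt_k0k.
have [|pos2] := posnP (a k.+2); first by right.
have pos1 : 0 < a k.+1.
  by apply: (nz_a (i := k0) (j := k.+2)) => //; [exact: leq_ltn_trans desc0|lia].
case: desc_k => [lt_k|]; last by move=> z1; rewrite z1 in pos1.
left; rewrite -(ltn_pmul2l (leq_ltn_trans (leq0n _) lt_k)).
by apply: leq_ltn_trans (lc_a k) _; rewrite -mulnn ltn_pmul2r.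
Qed.

Lemma log_concave_unimodal N : (forall k, N <= k -> a k = 0) -> unimodal a.
Proof.
move=> supp_a; pose m := find (fun k => a k.+1 < a k) (iota 0 N).
have le_mN : m <= N by rewrite -[N in _ <= N](size_iota 0 N) find_size.
exists m; split=> [k lt_km|k le_mk].
  have := before_find 0 lt_km; rewrite nth_iota ?add0n; last by lia.
  by move/negbT; rewrite -leqNgt.
have [le_Nm|lt_mN] := leqP N m.
  by rewrite (supp_a k.+1) // (leq_trans le_Nm (leqW le_mk)).
have found : has (fun k => a k.+1 < a k) (iota 0 N) by rewrite has_find size_iota.
have := nth_find 0 found; rewrite -/m nth_iota // add0n => /log_concave_desc/(_ le_mk).
by case=> [/ltnW|->].
Qed.

End LogConcaveUnimodal.

Theorem mainTheorem9 (l r n : nat) (hl : (0 < l)%N) (hr : (0 < r)%N) (hn : (r <= n)%N) :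
  log_concave (fun k => A l r n k) /\ unimodal (fun k => A l r n k).
Proof.
case: l hl => [//|l] hl.
have A_arec k : A l.+1 r n k = arec l.+1 r n k.+1 by rewrite A_count count_arec.
have lc : log_concave (fun k => A l.+1 r n k).
  by move=> k; rewrite !A_arec; exact: (arec_log_concave hl hr hn k.+1).
split=> //; apply: (@log_concave_unimodal _ lc _ n).
  by move=> i j k; rewrite !A_arec !arec_gt0 //; lia.
by move=> k le_nk; apply/eqP; rewrite A_arec arec_eq0 //; lia.
Qed.
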